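(* Let $G$ be a graph whose twin graph $G^*$ is isomorphic to a 5-cycle with one chord (so $G^*$ has two adjacent degree-3 vertices and three degree-2 vertices, two of which are adjacent to each other), where the two adjacent degree-2 vertices are of type (1) and the other three vertices are of type (1K). Then $D(G)\neq n(G)-2$.
   Context: All graphs are finite and simple; $n(G)=|V(G)|$; $N_G(u)$ is the neighborhood of $u$. A distinguishing coloring of a graph $G$ is a (not necessarily proper) vertex coloring such that the only automorphism of $G$ mapping every vertex to a vertex of the same color is the identity; the distinguishing number $D(G)$ is the minimum number of colors in a distinguishing coloring of $G$. Two distinct vertices $u,v$ are twins if $N_G(u)\setminus\{v\}=N_G(v)\setminus\{u\}$. The relation $u\equiv v$ iff $u=v$ or $u,v$ are twins is an equivalence relation; the class of $v$ is denoted $v^*$. The twin graph $G^*$ has the equivalence classes as vertices, distinct classes $u^*,v^*$ being adjacent iff $uv\in E(G)$. Each class induces a complete or an edgeless graph. A class $v^*$ is of type (1) if $|v^*|=1$, of type (K) if $|v^*|\ge 2$ and it induces a complete graph, and of type (N) if $|v^*|\ge2$ and it induces an edgeless graph; type (1K) means type (1) or (K), type (1N) means (1) or (N), and type (KN) means (K) or (N). *)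

From mathcomp Require Import all_boot fingroup perm.
Set Implicit Arguments. Unset Strict Implicit. Unset Printing Implicit Defensive.

Definition simple_graph (T : finType) (e : rel T) : Prop :=
  symmetric e /\ irreflexive e.

Section Defs.
Variables (T : finType) (e : rel T).

Definition nbhd (u : T) : {set T} := [set w | e u w].

Definition twins (u v : T) : bool :=
  (u != v) && (nbhd u :\ v == nbhd v :\ u).

Definition twin_eq (u v : T) : bool := (u == v) || twins u v.

Definition twin_class (v : T) : {set T} := [set u | twin_eq u v].

Definition is_twin_class (C : {set T}) : Prop := exists v, C = twin_class v.

Definition type1 (C : {set T}) : bool := #|C| == 1.
Definition typeK (C : {set T}) : bool :=
  (2 <= #|C|) && [forall u in C, forall v in C, (u != v) ==> e u v].
Definition typeN (C : {set T}) : bool :=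
  (2 <= #|C|) && [forall u in C, forall v in C, ~~ e u v].
Definition type1K (C : {set T}) : bool := type1 C || typeK C.

(* The twin graph G^* is isomorphic to the graph H on 'I_k (given by rel h)
   via phi : phi is a bijection from 'I_k onto the set of twin classes, and
   distinct classes phi i, phi j are adjacent in G^* (some/any u in phi i,
   v in phi j with uv in E(G)) iff h i j. *)
Definition twin_graph_iso (k : nat) (h : rel 'I_k) (phi : 'I_k -> {set T}) : Prop :=
  [/\ injective phi,
      (forall i, is_twin_class (phi i)),
      (forall C, is_twin_class C -> exists i, C = phi i) &
      (forall i j, i != j ->
         (h i j <-> exists u v, [/\ u \in phi i, v \in phi j & e u v]))].

Definition automorphism (s : {perm T}) : Prop :=
  forall u v, e (s u) (s v) = e u v.

Definition distinguishing (k : nat) (c : T -> 'I_k) : Prop :=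
  forall s : {perm T}, automorphism s -> (forall x, c (s x) = c x) -> s = 1%g.

Definition has_dist_col (k : nat) : Prop := exists c : T -> 'I_k, distinguishing c.

Lemma has_dist_col_card : has_dist_col #|T|.
Proof.
exists (@enum_rank T) => s _ Hs; apply/permP => x; rewrite perm1.
by apply: enum_rank_inj; rewrite Hs.
Qed.

Definition has_dist_colb (k : nat) : bool :=
  [exists c : {ffun T -> 'I_k},
   [forall s : {perm T}, [forall u, forall v, e (s u) (s v) == e u v] ==>
      [forall x, c (s x) == c x] ==> (s == 1%g)]].

Lemma has_dist_colP k : reflect (has_dist_col k) (has_dist_colb k).
Proof.
apply: (iffP existsP).
- move=> [c /forallP Hc]; exists c => s Ha Hs.
  apply/eqP; move: (Hc s) => /implyP H1.
  have H2 := H1 (introT forallP (fun u => introT forallP (fun v => introT eqP (Ha u v)))).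
  by move/implyP: H2; apply; apply/forallP => x; rewrite Hs.
- move=> [c Hc]; exists (finfun c); apply/forallP => s; apply/implyP => /forallP Ha.
  apply/implyP => /forallP Hs; apply/eqP; apply: Hc.
    by move=> u v; move/forallP: (Ha u) => /(_ v) /eqP.
  by move=> x; move/eqP: (Hs x); rewrite !ffunE.
Qed.

Lemma has_dist_col_ex : exists k, has_dist_colb k.
Proof. by exists #|T|; apply/has_dist_colP; exact: has_dist_col_card. Qed.

Definition distinguishing_number : nat := ex_minn has_dist_col_ex.

End Defs.

(* The "house": 5-cycle 0-1-2-3-4-0 with chord 0-2.
   Degree-3 vertices: 0, 2 (adjacent); degree-2 vertices: 1, 3, 4;
   the two adjacent degree-2 vertices are 3 and 4. *)
Definition house_edge (a b : nat) : bool :=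
  [|| (a == 0) && (b == 1), (a == 1) && (b == 2), (a == 2) && (b == 3),
      (a == 3) && (b == 4), (a == 4) && (b == 0) | (a == 0) && (b == 2)].
Definition house : rel 'I_5 := fun i j => house_edge i j || house_edge j i.

From mathcomp Require Import all_boot fingroup perm.
From mathcomp Require Import zify.

Set Implicit Arguments. Unset Strict Implicit. Unset Printing Implicit Defensive.

(* Pick one vertex r_i in each twin class.  Since adjacency is constant
   between twin classes, the r_i span a copy of the house.  Give r_0, r_1,
   r_2, r_3 one common colour and every other vertex its own colour: this
   uses n - 3 colours, and a colour-preserving automorphism fixes r_4 and all
   vertices outside {r_0,..,r_3}, so it induces an automorphism of the house
   fixing 4, which is the identity.  Hence D(G) <= n - 3. *)

Section Twins.
Variables (T : finType) (e : rel T).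
Hypotheses (e_sym : symmetric e) (e_irr : irreflexive e).

Lemma twinsP u v :
  reflect (u != v /\ forall x, x != u -> x != v -> e u x = e v x) (twins e u v).
Proof.
apply: (iffP andP) => -[uv Nuv]; split=> //.
  move=> x xu xv; have /setP/(_ x) := eqP Nuv.
  by rewrite !in_setD1 !in_set xu xv.
apply/eqP/setP => x; rewrite !in_setD1 !in_set.
have [->|xv] := eqVneq x v; first by rewrite e_irr andbF.
have [->|xu] := eqVneq x u; first by rewrite e_irr.
exact: Nuv.
Qed.

Lemma twin_eq_edge u v x : twin_eq e u v -> x != u -> x != v -> e u x = e v x.
Proof. by case/orP => [/eqP ->|/twinsP[_]] //; apply. Qed.

Lemma twin_eq_sym u v : twin_eq e u v -> twin_eq e v u.
Proof.
case/orP => [/eqP ->|/twinsP[uv Nuv]]; first by rewrite /twin_eq eqxx.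
apply/orP; right; apply/twinsP; split; first by rewrite eq_sym.
by move=> x xv xu; rewrite Nuv.
Qed.

Lemma twin_eq_trans u v w : twin_eq e u v -> twin_eq e v w -> twin_eq e u w.
Proof.
case/orP => [/eqP ->|Tuv] //; case/orP => [/eqP <-|Tvw]; first by rewrite /twin_eq Tuv orbT.
have [->|uw] := eqVneq u w; first by rewrite /twin_eq eqxx.
have [uv Nuv] := twinsP _ _ Tuv; have [vw Nvw] := twinsP _ _ Tvw.
apply/orP; right; apply/twinsP; split=> // x xu xw.
have [->|xv] := eqVneq x v; last by rewrite Nuv // Nvw.
by rewrite e_sym Nvw // [e w u]e_sym Nuv 1?eq_sym.
Qed.

Lemma twin_class_eq u v : twin_eq e u v -> twin_class e u = twin_class e v.
Proof.
move=> Tuv; apply/setP => x; rewrite !in_set.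
by apply/idP/idP => Tx; [apply: twin_eq_trans Tuv | apply: twin_eq_trans (twin_eq_sym Tuv)].
Qed.

End Twins.

Section TwinGraphIso.
Variables (T : finType) (e : rel T) (k : nat) (h : rel 'I_k) (phi : 'I_k -> {set T}).
Hypotheses (e_sym : symmetric e) (e_irr : irreflexive e).
Hypothesis iso : twin_graph_iso e h phi.

Lemma twin_graph_iso_class i x : x \in phi i -> phi i = twin_class e x.
Proof.
case: iso => _ cl _ _; have [v ->] := cl i; rewrite in_set => Txv.
by rewrite (twin_class_eq e_sym e_irr Txv).
Qed.

Lemma twin_graph_iso_disjoint i j x : x \in phi i -> x \in phi j -> i = j.
Proof.
case: iso => inj _ _ _ xi xj.
by apply: inj; rewrite (twin_graph_iso_class xi) (twin_graph_iso_class xj).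
Qed.

Lemma twin_graph_iso_edge i j x y :
  i != j -> x \in phi i -> y \in phi j -> e x y = h i j.
Proof.
case: iso => _ _ _ adj ij xi yj.
apply/idP/idP => [exy|]; first by apply/(adj i j ij); exists x, y.
case/(adj i j ij) => u [v [ui vj euv]].
have neq a b : a \in phi j -> b \in phi i -> a != b.
  move=> aj bi; apply: contraNneq ij => ab.
  by apply/eqP/(twin_graph_iso_disjoint bi); rewrite -ab.
have Txu : twin_eq e u x by move: ui; rewrite (twin_graph_iso_class xi) in_set.
have Tvy : twin_eq e v y by move: vj; rewrite (twin_graph_iso_class yj) in_set.
rewrite e_sym -(twin_eq_edge e_irr Tvy) 1?eq_sym ?neq // e_sym.
by rewrite -(twin_eq_edge e_irr Txu) ?neq.
Qed.

Lemma twin_graph_iso_reps :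
  irreflexive h -> exists2 r : 'I_k -> T, injective r & forall i j, e (r i) (r j) = h i j.
Proof.
move=> h_irr; have nz i : exists x, x \in phi i.
  by case: iso => _ cl _ _; have [v ->] := cl i; exists v; rewrite in_set /twin_eq eqxx.
pose r i := xchoose (nz i); have r_phi i : r i \in phi i := xchooseP (nz i).
exists r => [i j rij|i j]; first by apply: (twin_graph_iso_disjoint (r_phi i)); rewrite rij.
have [<-|ij] := eqVneq i j; first by rewrite e_irr h_irr.
exact: twin_graph_iso_edge.
Qed.

End TwinGraphIso.

Section Distinguishing.
Variables (T : finType) (e : rel T).

Lemma distinguishing_number_le k : has_dist_col e k -> distinguishing_number e <= k.
Proof.
by move=> /has_dist_colP Dk; rewrite /distinguishing_number; case: ex_minnP => m _; apply.
Qed.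

(* Colour [w |: S] with a single colour and the remaining vertices with
   pairwise distinct colours. *)
Lemma distinguishing_number_merge (S : {set T}) (w : T) :
  w \notin S ->
  (forall s : {perm T}, automorphism e s -> perm_on (w |: S) s -> s = 1%g) ->
  distinguishing_number e <= #|~: S|.
Proof.
rewrite -in_setC => wS rigid; apply: distinguishing_number_le.
pose f x := if x \in S then w else x.
have fS x : f x \in ~: S by rewrite /f; case: ifP => // /negbT; rewrite in_setC.
exists (fun x => enum_rank_in wS (f x)) => s aut_s col_s; apply: rigid => //.
apply/subsetP => x; rewrite inE; apply: contraNT; rewrite in_setU1 negb_or => /andP[xw xS].
have := enum_rank_in_inj (fS (s x)) (fS x) (col_s x).
by rewrite /f (negbTE xS); case: ifP => [_ wx|_ ->]; rewrite ?wx ?eqxx in xw.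
Qed.

Lemma automorphism_induced k (h : rel 'I_k) (r : 'I_k -> T) (s : {perm T}) :
  (forall i j, e (r i) (r j) = h i j) -> automorphism e s ->
  (forall i, s (r i) \in codom r) ->
  exists2 p : 'I_k -> 'I_k, (forall i, s (r i) = r (p i)) & (forall i j, h (p i) (p j) = h i j).
Proof.
move=> r_edge aut_s s_r; exists (fun i => iinv (s_r i)) => [i|i j]; first by rewrite f_iinv.
by rewrite -r_edge !f_iinv aut_s.
Qed.

End Distinguishing.

Local Notation hv n := (@Ordinal 5 n isT).

Definition house_vertices : seq 'I_5 := [:: hv 0; hv 1; hv 2; hv 3; hv 4].

Lemma mem_house_vertices i : i \in house_vertices.
Proof. by case: i => [[|[|[|[|[|?]]]]] ?]. Qed.

Lemma house_irr : irreflexive house.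
Proof. by case=> [[|[|[|[|[|?]]]]] ?]. Qed.

(* The map sending 0, 1, 2, 3 to a, b, c, d; it fixes 4, the default of [nth]. *)
Definition extend4 (a b c d : 'I_5) (i : 'I_5) : 'I_5 := nth (hv 4) [:: a; b; c; d] i.

Lemma house_rigid_check :
  all (fun a => all (fun b => all (fun c => all (fun d =>
    let q := extend4 a b c d in
    all (fun i => all (fun j => house (q i) (q j) == house i j) house_vertices) house_vertices
      ==> all (fun i => q i == i) house_vertices)
  house_vertices) house_vertices) house_vertices) house_vertices.
Proof. by vm_compute. Qed.

Lemma house_aut_fix4 (p : 'I_5 -> 'I_5) :
  p (hv 4) = hv 4 -> (forall i j, house (p i) (p j) = house i j) -> p =1 id.
Proof.
move=> p4 p_aut i; have inV := mem_house_vertices.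
have p_ext : extend4 (p (hv 0)) (p (hv 1)) (p (hv 2)) (p (hv 3)) =1 p.
  by rewrite /extend4 => -[[|[|[|[|[|?]]]]] ?] //=; rewrite -1?{1}p4; congr p; apply: val_inj.
have /allP/(_ _ (inV (p (hv 0))))/allP/(_ _ (inV (p (hv 1)))) := house_rigid_check.
move=> /allP/(_ _ (inV (p (hv 2))))/allP/(_ _ (inV (p (hv 3)))) /implyP rigid.
apply/eqP; rewrite -p_ext; apply: (allP (rigid _)) (inV i).
by apply/allP => j _; apply/allP => l _; rewrite !p_ext p_aut.
Qed.

Theorem lemma4p8 (T : finType) (e : rel T) (phi : 'I_5 -> {set T}) :
  simple_graph e ->
  twin_graph_iso e house phi ->
  (forall i : 'I_5, (3 <= val i)%N -> type1 (phi i)) ->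
  (forall i : 'I_5, (val i < 3)%N -> type1K e (phi i)) ->
  distinguishing_number e <> (#|T| - 2)%N.
Proof.
move=> [e_sym e_irr] iso _ _.
have [r r_inj r_edge] := twin_graph_iso_reps e_sym e_irr iso house_irr.
pose S := [set r (hv 0); r (hv 1); r (hv 3)].
have S3 : #|S| = 3 by rewrite /S -setUA !cardsU1 cards1 !inE !(inj_eq r_inj).
have wS : r (hv 2) \notin S by rewrite /S !inE !(inj_eq r_inj).
have : distinguishing_number e <= #|~: S|.
  apply: (distinguishing_number_merge wS) => s aut_s s_on.
  have s_fix x : x \notin r (hv 2) |: S -> s x = x := out_perm s_on.
  have s_codom i : s (r i) \in codom r.
    have [riA|/s_fix ->] := boolP (r i \in r (hv 2) |: S); last exact: codom_f.
    by move: riA; rewrite -(perm_closed _ s_on) !inE -orbA => /or4P[]/eqP->; apply: codom_f.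
  have [p s_r p_aut] := automorphism_induced r_edge aut_s s_codom.
  have p4 : p (hv 4) = hv 4 by apply: (r_inj); rewrite -s_r s_fix // !inE !(inj_eq r_inj).
  apply/permP => x; rewrite perm1.
  have [|/s_fix //] := boolP (x \in r (hv 2) |: S).
  by rewrite !inE -orbA => /or4P[]/eqP->; rewrite s_r (house_aut_fix4 p4 p_aut).
rewrite cardsCs setCK S3; have := max_card S; rewrite S3; lia.
Qed.
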